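(* Let $m\ge1$ and let $V\subset(\mathbb C^N)^{\otimes m}$ be the subspace of traceless tensors. Let $(\mathbb C^N)^{\otimes(m+1)}$ be acted on by $\mathrm{End}(\mathbb C^N)\otimes U(\mathfrak{gl}_N)$, where $\mathrm{End}(\mathbb C^N)$ acts on the first tensor factor and $U(\mathfrak{gl}_N)$ acts on the last $m$ factors via $E_{ij}\mapsto\sum_{p=1}^m 1^{\otimes(p-1)}\otimes E_{ij}\otimes1^{\otimes(m-p)}$. Then the action of the element $$\frac{\tilde E(\eta-u)\,E(\eta+u)}{u-\eta}\in\mathrm{End}(\mathbb C^N)\otimes U(\mathfrak{gl}_N)(u)$$ on $(\mathbb C^N)^{\otimes(m+1)}$ preserves the subspace $\mathbb C^N\otimes V$, and on this subspace it coincides with the action of $F(u)\in\mathrm{End}(\mathbb C^N)\otimes U(\mathfrak g)[u]$ (with $U(\mathfrak g)\subset U(\mathfrak{gl}_N)$ acting by restriction).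
   Context: $M=\lfloor N/2\rfloor$. Index set $I=\{-M,\dots,-1,1,\dots,M\}$ if $N=2M$, $I=\{-M,\dots,-1,0,1,\dots,M\}$ if $N=2M+1$; $e_i$ ($i\in I$) basis of $\mathbb C^N$, $E_{ij}$ matrix units. $G=O_N$ is the subgroup of $GL_N$ preserving the symmetric form $\langle e_i,e_j\rangle=\delta_{i,-j}$, or $G=Sp_N$ ($N$ even) preserving the alternating form $\langle e_i,e_j\rangle=\delta_{i,-j}\operatorname{sgn}i$; $\mathfrak g\subset\mathfrak{gl}_N$ its Lie algebra. $\varepsilon_{ij}=\operatorname{sgn}i\operatorname{sgn}j$ for $Sp_N$, $1$ for $O_N$; $F_{ij}=E_{ij}-\varepsilon_{ij}E_{-j,-i}$; $\eta=\frac12$ if $\mathfrak g=\mathfrak{so}_N$, $\eta=-\frac12$ if $\mathfrak g=\mathfrak{sp}_N$. $E(u)=-u+\sum_{i,j}E_{ij}\otimes E_{ji}$, $\tilde E(u)=-u+\sum_{i,j}\varepsilon_{ij}E_{ij}\otimes E_{-i,-j}$ (in $\mathrm{End}(\mathbb C^N)\otimes U(\mathfrak{gl}_N)[u]$), $F(u)=-u-\eta+\sum_{i,j}E_{ij}\otimes F_{ji}$. A tensor $t\in(\mathbb C^N)^{\otimes m}$ is traceless if for every pair of distinct positions $p\ne q$, applying the form $\langle\,,\rangle$ to the $p$-th and $q$-th tensor factors of $t$ gives $0\in(\mathbb C^N)^{\otimes(m-2)}$. *)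

From HB Require Import structures.
From mathcomp Require Import all_boot all_order all_algebra all_field.
Set Implicit Arguments. Unset Strict Implicit. Unset Printing Implicit Defensive.
Import Order.TTheory GRing.Theory Num.Theory.
Local Open Scope ring_scope.

(* Index set I.  We use 'I_N = {0..N-1} with the order-preserving labelling
   lab : 'I_N -> int onto I = {-M..-1,(0),1..M}, M = N./2 (0 only if N odd). *)
Definition lab (N : nat) (i : 'I_N) : int :=
  if odd N then (i%:Z - (N./2)%:Z)
  else if (i < N./2)%N then i%:Z - (N./2)%:Z else i%:Z - (N./2)%:Z + 1.

(* the index -i; rev_ord satisfies lab (neg i) = - lab i *)
Definition neg (N : nat) (i : 'I_N) : 'I_N := rev_ord i.

(* G = O_N (Orth) or Sp_N (Symp, N even) *)
Inductive grp := Orth | Symp.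

Definition sgnI (N : nat) (i : 'I_N) : algC := (Num.sg (lab i))%:~R.

Definition eps (g : grp) (N : nat) (i j : 'I_N) : algC :=
  if g is Symp then sgnI i * sgnI j else 1.

Definition eta (g : grp) : algC := if g is Orth then 2^-1 else - 2^-1.

Definition form (g : grp) (N : nat) (i j : 'I_N) : algC :=
  if lab i == - lab j then (if g is Symp then sgnI i else 1) else 0.

(* basis words of length m; (C^N)^{(x) m} as coordinate functions on words *)
Notation word N m := ({ffun 'I_m -> 'I_N}).
Notation T0 N m := ({ffun word N m -> algC}).
(* C^N (x) (C^N)^{(x) m} = (C^N)^{(x)(m+1)}, first factor separated *)
Notation T1 N m := ({ffun 'I_N * word N m -> algC}).

Definition scl (A : finType) (c : algC) (f : {ffun A -> algC}) : {ffun A -> algC} :=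
  [ffun x => c * f x].

Definition setw (N m : nat) (w : word N m) (p : 'I_m) (k : 'I_N) : word N m :=
  [ffun q => if q == p then k else w q].

(* action of E_ij in U(gl_N) on (C^N)^{(x) m}: sum over positions p *)
Definition rhoE (N m : nat) (i j : 'I_N) (t : T0 N m) : T0 N m :=
  [ffun w : word N m => \sum_(p < m) (w p == i)%:R * t (setw w p j)].

Definition slice (N m : nat) (T : T1 N m) (b : 'I_N) : T0 N m :=
  [ffun w : word N m => T (b, w)].

(* action of A (x) B, A in End(C^N) (matrix), B an operator on (C^N)^{(x) m} *)
Definition act (N m : nat) (A : 'M[algC]_N) (B : T0 N m -> T0 N m)
  (T : T1 N m) : T1 N m :=
  [ffun x : 'I_N * word N m => \sum_(b < N) A x.1 b * B (slice T b) x.2].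

Definition Eop (N m : nat) (u : algC) (T : T1 N m) : T1 N m :=
  scl (- u) T + \sum_(i < N) \sum_(j < N) act (delta_mx i j) (@rhoE N m j i) T.

Definition Etil (g : grp) (N m : nat) (u : algC) (T : T1 N m) : T1 N m :=
  scl (- u) T + \sum_(i < N) \sum_(j < N)
     scl (eps g i j) (act (delta_mx i j) (@rhoE N m (neg i) (neg j)) T).

Definition rhoF (g : grp) (N m : nat) (i j : 'I_N) (t : T0 N m) : T0 N m :=
  rhoE i j t - scl (eps g i j) (rhoE (neg j) (neg i) t).

Definition Fop (g : grp) (N m : nat) (u : algC) (T : T1 N m) : T1 N m :=
  scl (- u - eta g) T + \sum_(i < N) \sum_(j < N)
     act (delta_mx i j) (@rhoF g N m j i) T.

Definition traceless (g : grp) (N m : nat) (t : T0 N m) : Prop :=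
  forall p q : 'I_m, p != q -> forall w : word N m,
    \sum_(i < N) \sum_(j < N) form g i j * t (setw (setw w p i) q j) = 0.

Definition inCV (g : grp) (N m : nat) (T : T1 N m) : Prop :=
  forall a : 'I_N, traceless g (slice T a).

From mathcomp Require Import all_boot all_order all_algebra all_field.
From mathcomp Require Import zify ring.
Import GRing.Theory Num.Theory.
Set Implicit Arguments. Unset Strict Implicit. Unset Printing Implicit Defensive.
Local Open Scope ring_scope.

(* E(u) acts as -u + P and Etilde(u) as -u + Q, where P = sum_p P_0p swaps the
   first tensor factor with factor p and Q = sum_p Q_0p contracts these two
   factors with the form and re-inserts its dual.  On C^N (x) V one has
   Q P = c Q, where c = 2 eta = +-1 is the symmetry sign of the form: the
   terms Q_0p P_0q with q <> p contract two factors of a traceless tensor.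
   Hence Etilde(eta - u) E(eta + u) = (u - eta) (-u - eta + P - Q)
   = (u - eta) F(u).  That F(u) preserves C^N (x) V comes down to P and Q
   having the same contractions of two factors p <> q of a traceless tensor. *)

Lemma sum_delta (I : finType) (R : pzSemiRingType) (k : I) (F : I -> R) :
  \sum_i (i == k)%:R * F i = F k.
Proof.
rewrite (bigD1 k) //= eqxx mul1r big1 ?addr0 // => i /negbTE ->.
by rewrite mul0r.
Qed.

Lemma sum_pair (I : finType) (V : nmodType) (p q : I) (F : I -> V) :
  p != q -> (forall r, r != p -> r != q -> F r = 0) -> \sum_r F r = F p + F q.
Proof.
move=> pq F0; rewrite (bigD1 p) // (bigD1 q) 1?eq_sym //= addrA big1 ?addr0 //.
by move=> r /andP[rp rq]; apply: F0.
Qed.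

Lemma lab_neg N (i : 'I_N) : lab (neg i) = - lab i.
Proof.
rewrite /lab /neg /=; have := odd_double_half N; have := ltn_ord i.
case: (odd N) => /= hi hN; first by rewrite subnS; lia.
case: ltnP => h1; case: ltnP => h2; rewrite ?subnS; lia.
Qed.

Lemma lab_inj N : injective (@lab N).
Proof.
move=> i j; rewrite /lab; have := odd_double_half N.
case: (odd N) => /= hN; first by move=> h; apply/val_inj => /=; lia.
case: ltnP => h1; case: ltnP => h2 h; apply/val_inj => /=; lia.
Qed.

Lemma lab_neq0 N (i : 'I_N) : ~~ odd N -> lab i != 0.
Proof.
rewrite /lab; have := odd_double_half N; case: (odd N) => //= hN _.
case: ltnP => h1; lia.
Qed.

Lemma negK N : involutive (@neg N).
Proof. by move=> i; rewrite /neg rev_ordK. Qed.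

Lemma neg_inj N : injective (@neg N).
Proof. exact: can_inj (@negK N). Qed.

Lemma lab_eq_opp N (i j : 'I_N) : (lab i == - lab j) = (i == neg j).
Proof.
apply/eqP/eqP => [h|->]; last by rewrite lab_neg.
by apply: lab_inj; rewrite lab_neg.
Qed.

(* The form pairs e_i only with e_(-i), with coefficient [form_coef g i];
   it is symmetric or antisymmetric according to [form_sign g]. *)
Definition form_coef (g : grp) N (i : 'I_N) : algC :=
  if g is Symp then sgnI i else 1.

Definition form_sign (g : grp) : algC := if g is Symp then -1 else 1.

Lemma formE g N (i j : 'I_N) : form g i j = (j == neg i)%:R * form_coef g i.
Proof.
rewrite /form lab_eq_opp; case: (eqVneq i (neg j)) => [->|ij].
  by rewrite negK eqxx mul1r.
case: eqVneq => [ji|]; last by rewrite mul0r.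
by case/eqP: ij; rewrite ji negK.
Qed.

Lemma epsE g N (i j : 'I_N) : eps g i j = form_coef g i * form_coef g j.
Proof. by case: g => //=; rewrite mulr1. Qed.

Lemma form_coef_neg g N (i : 'I_N) :
  form_coef g (neg i) = form_sign g * form_coef g i.
Proof. by case: g => /=; rewrite ?mul1r // /sgnI lab_neg sgrN mulrNz mulN1r. Qed.

Lemma form_coef_sqr g N (i : 'I_N) :
  (g = Symp -> ~~ odd N) -> form_coef g i ^+ 2 = 1.
Proof.
case: g => [|/(_ erefl) evenN] /=; first by rewrite expr1n.
by rewrite /sgnI -rmorphXn /= expr2; have := lab_neq0 i evenN; case: sgrP.
Qed.

Lemma form_sign_eta g : form_sign g = 2 * eta g.
Proof. by case: g => /=; rewrite ?mulrN mulfV // pnatr_eq0. Qed.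

Section Words.
Variables N m : nat.
Implicit Types (w : word N m) (p q r : 'I_m) (k l : 'I_N).

Lemma setw_eq w p k : setw w p k p = k.
Proof. by rewrite ffunE eqxx. Qed.

Lemma setw_neq w p k q : q != p -> setw w p k q = w q.
Proof. by rewrite ffunE => /negbTE ->. Qed.

Lemma setw_setw w p k l : setw (setw w p k) p l = setw w p l.
Proof. by apply/ffunP => r; rewrite !ffunE; case: eqP. Qed.

Lemma setwC w p q k l : p != q -> setw (setw w p k) q l = setw (setw w q l) p k.
Proof.
move=> pq; apply/ffunP => r; rewrite !ffunE.
by case: (eqVneq r q) => [->|//]; rewrite eq_sym (negbTE pq).
Qed.

Lemma setw3C w p q r k l k' : r != p -> r != q ->
  setw (setw (setw w p k) q l) r k' = setw (setw (setw w r k') p k) q l.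
Proof.
move=> rp rq; apply/ffunP => s; rewrite !ffunE.
by case: (eqVneq s r) => [->|//]; rewrite (negbTE rp) (negbTE rq).
Qed.

End Words.

Section Operators.
Variables (g : grp) (N m : nat).
Implicit Types (T : T1 N m) (t : T0 N m) (w : word N m) (p q : 'I_m).

Lemma act_delta_mx i j B T a w :
  act (delta_mx i j) B T (a, w) = (i == a)%:R * B (slice T j) w.
Proof.
rewrite ffunE (bigD1 j) //= big1 => [|b /negbTE jb]; last by rewrite !mxE jb andbF mul0r.
by rewrite !mxE eqxx andbT addr0 eq_sym.
Qed.

Lemma sum_act_delta_mx (B : 'I_N -> 'I_N -> T0 N m -> T0 N m) T a w :
  (\sum_i \sum_j act (delta_mx i j) (B i j) T) (a, w) = \sum_j B a j (slice T j) w.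
Proof.
rewrite sum_ffunE -(sum_delta a (fun i => \sum_j B i j (slice T j) w)).
apply: eq_bigr => i _; rewrite sum_ffunE mulr_sumr.
by apply: eq_bigr => j _; rewrite act_delta_mx.
Qed.

(* [swap_sum] and [contr_sum] are P and Q, the actions of sum E_ij (x) E_ji
   and sum eps_ij E_ij (x) E_(-i,-j). *)
Definition swap_sum T : T1 N m :=
  [ffun x : 'I_N * word N m => \sum_(p < m) T (x.2 p, setw x.2 p x.1)].

Definition head_contraction q T w : algC :=
  \sum_(j < N) form_coef g j * T (j, setw w q (neg j)).

Definition contr_sum T : T1 N m :=
  [ffun x : 'I_N * word N m => form_coef g x.1 *
     \sum_(p < m) (x.2 p == neg x.1)%:R * head_contraction p T x.2].

Lemma sliceE T a w : slice T a w = T (a, w).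
Proof. by rewrite ffunE. Qed.

Lemma swap_sumE T a w : swap_sum T (a, w) = \sum_(p < m) T (w p, setw w p a).
Proof. by rewrite ffunE. Qed.

Lemma contr_sumE T a w : contr_sum T (a, w) =
  form_coef g a * \sum_(p < m) (w p == neg a)%:R * head_contraction p T w.
Proof. by rewrite ffunE. Qed.

Lemma sum_rhoE T a w :
  \sum_j rhoE j a (slice T j) w = \sum_(p < m) T (w p, setw w p a).
Proof.
under eq_bigr do rewrite ffunE; rewrite exchange_big /=.
apply: eq_bigr => p _; rewrite -(sum_delta (w p) (fun j => T (j, setw w p a))).
by apply: eq_bigr => j _; rewrite ffunE eq_sym.
Qed.

Lemma sum_eps_rhoE_neg T a w :
  \sum_j eps g a j * rhoE (neg a) (neg j) (slice T j) w =
  form_coef g a * \sum_(p < m) (w p == neg a)%:R * head_contraction p T w.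
Proof.
under eq_bigr do rewrite ffunE mulr_sumr; rewrite exchange_big mulr_sumr /=.
apply: eq_bigr => p _; rewrite /head_contraction !mulr_sumr.
by apply: eq_bigr => j _; rewrite ffunE epsE; ring.
Qed.

Lemma Eop_swap_sum u T : Eop u T = scl (- u) T + swap_sum T.
Proof. by apply/ffunP => -[a w]; rewrite !ffunE sum_act_delta_mx sum_rhoE. Qed.

Lemma scl_act c A B T : scl c (act A B T) = act A (fun t => scl c (B t)) T.
Proof.
by apply/ffunP => x; rewrite !ffunE mulr_sumr; apply: eq_bigr => b _; rewrite ffunE mulrCA.
Qed.

Lemma Etil_contr_sum u T : Etil g u T = scl (- u) T + contr_sum T.
Proof.
apply/ffunP => -[a w]; rewrite /Etil.
under eq_bigr do under eq_bigr do rewrite scl_act.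
rewrite !ffunE sum_act_delta_mx -sum_eps_rhoE_neg.
by under eq_bigr do rewrite ffunE.
Qed.

Lemma Fop_swap_contr_sum u T :
  Fop g u T = scl (- u - eta g) T + swap_sum T - contr_sum T.
Proof.
apply/ffunP => -[a w]; rewrite !ffunE sum_act_delta_mx -addrA -sum_rhoE.
rewrite -sum_eps_rhoE_neg -sumrB /=; congr (_ + _); apply: eq_bigr => j _.
by rewrite !ffunE !epsE [form_coef g j * _]mulrC.
Qed.

End Operators.

Section Contraction.
Variables (g : grp) (N m : nat).
Implicit Types (T : T1 N m) (t : T0 N m) (w : word N m) (p q : 'I_m).

Definition contraction p q (t : word N m -> algC) w : algC :=
  \sum_i form_coef g i * t (setw (setw w p i) q (neg i)).

Lemma tracelessP t :
  traceless g t <-> forall p q, p != q -> forall w, contraction p q t w = 0.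
Proof.
have E p q w : \sum_i \sum_j form g i j * t (setw (setw w p i) q j) = contraction p q t w.
  apply: eq_bigr => i _; under eq_bigr do rewrite formE mulrAC.
  by rewrite -mulr_suml sum_delta mulrC.
by split=> tr p q pq w; [rewrite -E | rewrite E]; apply: tr.
Qed.

Lemma sliceD T1 T2 a : slice (T1 + T2) a = slice T1 a + slice T2 a.
Proof. by apply/ffunP => w; rewrite !ffunE. Qed.

Lemma sliceB T1 T2 a : slice (T1 - T2) a = slice T1 a - slice T2 a.
Proof. by apply/ffunP => w; rewrite !ffunE. Qed.

Lemma slice_scl c T a : slice (scl c T) a = scl c (slice T a).
Proof. by apply/ffunP => w; rewrite !ffunE. Qed.

Lemma contractionD p q t1 t2 w :
  contraction p q (t1 + t2) w = contraction p q t1 w + contraction p q t2 w.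
Proof. by rewrite -big_split; apply: eq_bigr => i _; rewrite ffunE mulrDr. Qed.

Lemma contractionB p q t1 t2 w :
  contraction p q (t1 - t2) w = contraction p q t1 w - contraction p q t2 w.
Proof. by rewrite -sumrB; apply: eq_bigr => i _; rewrite !ffunE mulrBr. Qed.

Lemma contraction_scl p q c t w :
  contraction p q (scl c t) w = c * contraction p q t w.
Proof. by rewrite mulr_sumr; apply: eq_bigr => i _; rewrite ffunE mulrCA. Qed.

Lemma head_contractionD q T1 T2 w : head_contraction g q (T1 + T2) w =
  head_contraction g q T1 w + head_contraction g q T2 w.
Proof. by rewrite -big_split; apply: eq_bigr => i _; rewrite ffunE mulrDr. Qed.

Lemma head_contraction_scl q c T w :
  head_contraction g q (scl c T) w = c * head_contraction g q T w.
Proof. by rewrite mulr_sumr; apply: eq_bigr => i _; rewrite ffunE mulrCA. Qed.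

Lemma head_contraction_setw q k T w :
  head_contraction g q T (setw w q k) = head_contraction g q T w.
Proof. by apply: eq_bigr => j _; rewrite setw_setw. Qed.

End Contraction.

Section Traceless.
Variables (g : grp) (N m : nat) (T : T1 N m).
Hypothesis HT : inCV g T.
Implicit Types (w : word N m) (p q r : 'I_m) (a : 'I_N).

Lemma inCV_contraction a p q w : p != q -> contraction g p q (slice T a) w = 0.
Proof. by move=> pq; apply: (proj1 (tracelessP _ _) (HT a)). Qed.

Lemma contraction_head_contraction p q r w : p != q -> r != p -> r != q ->
  contraction g p q (head_contraction g r T) w = 0.
Proof.
move=> pq rp rq; rewrite /contraction /head_contraction.
under eq_bigr do rewrite mulr_sumr; rewrite exchange_big big1 // => j _.
under eq_bigr do rewrite mulrCA; rewrite -mulr_sumr.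
rewrite [X in _ * X](_ : _ = 0) ?mulr0 //.
rewrite -[RHS](inCV_contraction j (setw w r (neg j)) pq).
by apply: eq_bigr => i _; rewrite sliceE setw3C.
Qed.

Lemma head_contraction_swap_sum p w :
  head_contraction g p (swap_sum T) w = form_sign g * head_contraction g p T w.
Proof.
have swap_split j : swap_sum T (j, setw w p (neg j)) = T (neg j, setw w p j) +
    \sum_(r < m | r != p) T (w r, setw (setw w r j) p (neg j)).
  rewrite swap_sumE (bigD1 p) //= setw_eq setw_setw; congr (_ + _).
  by apply: eq_bigr => r rp; rewrite setw_neq // setwC // eq_sym.
rewrite /head_contraction; under eq_bigr do rewrite swap_split mulrDr mulr_sumr.
rewrite big_split /= [X in _ + X]exchange_big /= [X in _ + X]big1 ?addr0; last first.
  move=> r rp; rewrite -[RHS](inCV_contraction (w r) w rp).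
  by apply: eq_bigr => j _; rewrite sliceE.
rewrite (reindex_inj (@neg_inj N)) mulr_sumr /=; apply: eq_bigr => j _.
by rewrite negK form_coef_neg mulrA.
Qed.

Lemma contr_sum_Eop v :
  contr_sum g (Eop v T) = scl (form_sign g - v) (contr_sum g T).
Proof.
have hc_Eop p w : head_contraction g p (Eop v T) w =
    (form_sign g - v) * head_contraction g p T w.
  rewrite Eop_swap_sum head_contractionD head_contraction_scl.
  by rewrite head_contraction_swap_sum; ring.
apply/ffunP => -[a w]; rewrite ffunE [RHS]ffunE contr_sumE /=.
under eq_bigr do rewrite hc_Eop mulrCA; rewrite -mulr_sumr; ring.
Qed.

Lemma contraction_swap_sum a p q w : p != q ->
  contraction g p q (slice (swap_sum T) a) w =
  head_contraction g q T (setw w p a) +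
  form_sign g * head_contraction g p T (setw w q a).
Proof.
move=> pq; have qp : q != p by rewrite eq_sym.
rewrite /contraction; under eq_bigr do rewrite sliceE swap_sumE mulr_sumr.
rewrite exchange_big (sum_pair pq) /=; last first.
  move=> r rp rq; rewrite -[RHS](inCV_contraction (w r) (setw w r a) pq).
  by apply: eq_bigr => i _; rewrite sliceE !setw_neq // setw3C.
congr (_ + _).
  by apply: eq_bigr => i _; rewrite (setw_neq _ _ pq) setw_eq (setwC _ _ _ qp) setw_setw.
rewrite (reindex_inj (@neg_inj N)) mulr_sumr; apply: eq_bigr => i _ /=.
by rewrite setw_eq setw_setw negK form_coef_neg (setwC _ _ _ pq) mulrA.
Qed.

Hypothesis Hg : g = Symp -> ~~ odd N.

Lemma contraction_contr_sum a p q w : p != q ->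
  contraction g p q (slice (contr_sum g T) a) w =
  head_contraction g q T (setw w p a) +
  form_sign g * head_contraction g p T (setw w q a).
Proof.
move=> pq; have qp : q != p by rewrite eq_sym.
rewrite /contraction; under eq_bigr do rewrite sliceE contr_sumE mulrCA mulr_sumr.
rewrite -mulr_sumr exchange_big (sum_pair pq) /=; last first.
  move=> r rp rq; have := contraction_head_contraction w pq rp rq.
  rewrite /contraction => hc0.
  under eq_bigr do rewrite (setw_neq _ _ rq) (setw_neq _ _ rp) mulrCA.
  by rewrite -mulr_sumr hc0 mulr0.
under eq_bigr do rewrite (setw_neq _ _ pq) setw_eq mulrCA.
under [X in _ + X]eq_bigr do rewrite setw_eq (inj_eq (@neg_inj N)) mulrCA.
rewrite !sum_delta negK (setwC _ _ _ pq) !head_contraction_setw form_coef_neg.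
have sqr := form_coef_sqr a Hg; ring: sqr.
Qed.

Lemma inCV_Fop u : inCV g (Fop g u T).
Proof.
move=> a; apply/tracelessP => p q pq w.
rewrite Fop_swap_contr_sum sliceB sliceD slice_scl contractionB contractionD.
rewrite contraction_scl inCV_contraction // mulr0 add0r.
by rewrite contraction_swap_sum // contraction_contr_sum // subrr.
Qed.

End Traceless.

Unset Implicit Arguments.

Theorem lemma2p3 (g : grp) (N m : nat) (Hm : (0 < m)%N)
  (Hg : g = Symp -> ~~ odd N)
  (u : algC) (Hu : u != eta g) (T : T1 N m) (HT : inCV g T) :
  let X := scl (u - eta g)^-1 (Etil g (eta g - u) (Eop (eta g + u) T)) in
  inCV g X /\ X = Fop g u T.
Proof.
move=> X; suff XF : X = Fop g u T by split; rewrite // XF; apply: inCV_Fop.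
have u_eta_neq0 : u - eta g != 0 by rewrite subr_eq0.
apply/ffunP => -[a w]; rewrite /X Etil_contr_sum contr_sum_Eop //.
by rewrite Eop_swap_sum Fop_swap_contr_sum !ffunE form_sign_eta; field.
Qed.
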